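(* Let $n\in\mathbf{N}$ and $A\subset[n]$ have property P. For each $a\in A\cap[1,\frac{2n}{3}]$ let $j_a\geqslant0$ be the unique integer with $2^{j_a}a\in\left(\frac n3,\frac{2n}{3}\right]$, and let $B_1=\{2^{j_a}a:a\in A\cap[1,\frac{2n}{3}]\}$. Let $A'''=\{m\in\mathbf{N}:3m\in A_{(\frac12,1]}+A_{(\frac12,1]}\}$. Then $|B_1|=\left|A\cap[1,\frac{2n}{3}]\right|$, $B_1$ and $A'''$ are disjoint subsets of $\left(\frac n3,\frac{2n}{3}\right]$, and consequently $|B_1|+|A'''|\leqslant\left\lceil\frac n3\right\rceil$.
   Context: A set $A\subset\mathbf{N}$ has property P if there are no $x,y,z\in A$ (not necessarily distinct $x,y$) with $z<x$, $z<y$ and $z\mid x+y$. $A_{(\alpha,\beta]}=A\cap(\alpha n,\beta n]$, where intervals denote sets of integers. *)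

From mathcomp Require Import all_boot.
From mathcomp Require Import finmap.
Set Implicit Arguments. Unset Strict Implicit. Unset Printing Implicit Defensive.
Local Open Scope fset_scope.

Definition propP (A : {fset nat}) : Prop :=
  forall x y z, x \in A -> y \in A -> z \in A -> (z < x)%N -> (z < y)%N -> ~~ (z %| (x + y))%N.

Definition subset_n (n : nat) (A : {fset nat}) : Prop :=
  forall a, a \in A -> (1 <= a <= n)%N.

Definition A_low (n : nat) (A : {fset nat}) : {fset nat} :=
  [fset a in A | ((1 <= a) && (3 * a <= 2 * n))%N].

Definition A_half (n : nat) (A : {fset nat}) : {fset nat} :=
  [fset a in A | ((n < 2 * a) && (a <= n))%N].

Definition half_sumset (n : nat) (A : {fset nat}) : {fset nat} :=
  [fset (x + y)%N | x in A_half n A, y in A_half n A].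

Definition A3 (n : nat) (A : {fset nat}) : {fset nat} :=
  [fset (s %/ 3)%N | s in half_sumset n A & (3 %| s)%N].

Lemma A3_mem n A m : (m \in A3 n A) = ((3 * m)%N \in half_sumset n A).
Proof.
apply/imfsetP/idP => [[s /= /andP [Hs H3] ->]|H].
  by rewrite mulnC divnK.
exists (3 * m)%N; first by rewrite !inE H dvdn_mulr.
by rewrite mulKn.
Qed.

Definition B1 (n : nat) (A : {fset nat}) (j : nat -> nat) : {fset nat} :=
  [fset (2 ^ j a * a)%N | a in A_low n A].

Definition mid_third (n m : nat) : bool := ((n < 3 * m) && (3 * m <= 2 * n))%N.

From mathcomp Require Import all_boot.
From mathcomp Require Import finmap zify.
Set Implicit Arguments. Unset Strict Implicit. Unset Printing Implicit Defensive.
Local Open Scope fset_scope.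

(* The map [a |-> 2^(j a) a] is injective on a set with property P, since two
   distinct elements of the same dyadic class would divide one another.  An
   element [3m] of the sumset has both summands larger than [m], so any
   [a <= 2^(j a) a = m] dividing [m] would divide the sum.  Hence [B_1] and
   [A'''] are disjoint subsets of (n/3, 2n/3], which has [ceil(n/3)] points. *)

Lemma propP_dvdN A z x : propP A -> z \in A -> x \in A -> (z < x)%N -> ~~ (z %| x)%N.
Proof.
move=> HP zA xA zx; apply: contraNN (HP x x z xA xA zA zx zx) => zx_dvd.
by rewrite addnn -mul2n dvdn_mull.
Qed.

Lemma propP_pow2_mulI A i k a b :
  propP A -> a \in A -> b \in A -> (2 ^ i * a = 2 ^ k * b)%N -> a = b.
Proof.
move=> HP; wlog le_ik : i k a b / (i <= k)%N.
  move=> W aA bA E; case: (leqP i k) => [|/ltnW] le; first exact: W E.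
  exact/esym/(W k i).
move=> aA bA; rewrite -(subnKC le_ik) expnD -mulnA => /eqP.
rewrite eqn_pmul2l ?expn_gt0 // => /eqP Ea.
have le_ba : (b <= a)%N by rewrite Ea leq_pmull ?expn_gt0.
case: (ltngtP b a) le_ba => // lt_ba _.
by have := propP_dvdN HP bA aA lt_ba; rewrite Ea dvdn_mull.
Qed.

Lemma card_B1 n A j : propP A -> #|` B1 n A j| = #|` A_low n A|.
Proof.
move=> HP; rewrite card_in_imfset // => a b /=.
rewrite !inE /= => /andP [aA _] /andP [bA _].
exact: (propP_pow2_mulI HP).
Qed.

Lemma A3P n A m : m \in A3 n A -> exists x y, [/\ x \in A, y \in A,
   ((n < 2 * x) && (x <= n))%N, ((n < 2 * y) && (y <= n))%N & (3 * m = x + y)%N].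
Proof.
rewrite A3_mem => /imfset2P [x /= + [y /= + ->]].
by rewrite !inE /= => /andP [xA Hx] /andP [yA Hy]; exists x, y.
Qed.

Lemma mid_third_A3 n A m : m \in A3 n A -> mid_third n m.
Proof. by case/A3P => x [y [_ _ Hx Hy E]]; rewrite /mid_third; lia. Qed.

Lemma B1_A3_disjoint n A j : propP A -> [disjoint B1 n A j & A3 n A].
Proof.
move=> HP; apply/fdisjointP => _ /imfsetP [a /= + ->].
rewrite !inE /= => /andP [aA _]; apply/negP.
case/A3P => x [y [xA yA Hx Hy E]].
have le_am : (a <= 2 ^ j a * a)%N by rewrite leq_pmull ?expn_gt0.
have ax : (a < x)%N by lia.
have ay : (a < y)%N by lia.
by have := HP x y a xA yA aA ax ay; rewrite -E dvdn_mull // dvdn_mull.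
Qed.

Lemma card_mid_third n (S : {fset nat}) :
  (forall m, m \in S -> mid_third n m) -> (#|` S| <= (n + 2) %/ 3)%N.
Proof.
move=> HS; set s := iota (n %/ 3).+1 ((2 * n) %/ 3 - n %/ 3).
have sub : S `<=` [fset x in s].
  by apply/fsubsetP => m /HS /andP [H1 H2]; rewrite inE /= mem_iota; lia.
apply: leq_trans (fsubset_leq_card sub) _.
by rewrite card_fseq (leq_trans (size_undup _)) // size_iota; lia.
Qed.

Theorem mainTheorem11 (n : nat) (A : {fset nat}) (j : nat -> nat) :
  subset_n n A -> propP A ->
  (* j a = j_a : the (unique) integer j >= 0 with 2^j a in (n/3, 2n/3] *)
  (forall a, a \in A_low n A -> mid_third n (2 ^ j a * a)%N) ->
  [/\ (#|` B1 n A j| = #|` A_low n A|)%fset,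
      (forall b, b \in B1 n A j -> mid_third n b),
      (forall m, m \in A3 n A -> mid_third n m),
      [disjoint B1 n A j & A3 n A]%fset
    & (#|` B1 n A j| + #|` A3 n A| <= (n + 2) %/ 3)%N].
Proof.
move=> _ HP Hj.
have HB b : b \in B1 n A j -> mid_third n b by case/imfsetP => a /= /Hj + ->.
have Hdis := B1_A3_disjoint n j HP.
split; [exact: card_B1 | exact: HB | exact: mid_third_A3 | exact: Hdis |].
rewrite -cardfsUI; move: Hdis; rewrite -fsetI_eq0 => /eqP ->.
rewrite cardfs0 addn0; apply: card_mid_third => m; rewrite inE.
by case/orP => [/HB | /mid_third_A3].
Qed.
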